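(* Let $R$ be a $*$-ring with unity and $a,b,c\in R$. Then: (1) $a\perp a$ implies $a=0$. (2) $a\perp b$ iff $b\perp a$ iff $a\perp(-b)$. (3) If $a\perp b$ and $c\leq a$, then $c\perp b$. (4) $a\perp b$ iff $a\leq a-b$. (5) If $a\leq b$, then $b-a\leq b$ and $b-a\perp a$. (6) If $a\perp b$, then the only common lower bound of $a$ and $b$ is $0$ (so $a\wedge b=0$), and $a+b$ is an upper bound of both $a$ and $b$. (7) If $a\perp b$ and $(a+b)\perp c$, then $a\perp(b+c)$.
   Context: Natural partial order: $a\leq b$ iff there is $x\in R$ with $a=xa=xb=ax^*=bx^*$. Orthogonality: $a\perp b$ iff there exists $x\in R$ with $xa=a=ax^*$ and $xb=0=bx^*$. *)

From HB Require Import structures.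
From mathcomp Require Import all_boot all_order all_algebra.
Set Implicit Arguments. Unset Strict Implicit. Unset Printing Implicit Defensive.
Import GRing.Theory.
Local Open Scope ring_scope.

Definition is_involution (R : pzRingType) (star : R -> R) : Prop :=
  [/\ forall x y : R, star (x + y) = star x + star y,
      forall x y : R, star (x * y) = star y * star x
    & forall x : R, star (star x) = x].

Definition star_le (R : pzRingType) (star : R -> R) (a b : R) : Prop :=
  exists x : R, [/\ a = x * a, x * a = x * b, x * b = a * star x
                  & a * star x = b * star x].

Definition star_orth (R : pzRingType) (star : R -> R) (a b : R) : Prop :=
  exists x : R, [/\ x * a = a, a = a * star x, x * b = 0 & 0 = b * star x].

(* Orthogonality is witnessed by a "local unit" x acting as identity on a and
   killing b; its complement 1 - x then witnesses the reverse orthogonality,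
   and the same x witnesses [a <= a + b].  Conversely a witness x of [a <= b]
   has x a = x b = a (and dually on the right), so it witnesses [a _|_ b - a];
   the order-theoretic statements reduce to these two translations. *)
From mathcomp Require Import all_boot all_order all_algebra.
Set Implicit Arguments.
Unset Strict Implicit.
Unset Printing Implicit Defensive.
Import GRing.Theory.
Local Open Scope ring_scope.

Section StarOrthogonality.
Variables (R : pzRingType) (star : R -> R).
Hypothesis star_inv : is_involution star.

Lemma starD x y : star (x + y) = star x + star y.
Proof. by case: star_inv. Qed.

Lemma starM x y : star (x * y) = star y * star x.
Proof. by case: star_inv. Qed.

Lemma starK x : star (star x) = x.
Proof. by case: star_inv. Qed.

Lemma star0 : star 0 = 0.
Proof. by apply: (@addrI _ (star 0)); rewrite -starD !addr0. Qed.

Lemma starN x : star (- x) = - star x.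
Proof. by apply: (@addrI _ (star x)); rewrite -starD !subrr star0. Qed.

Lemma star1 : star 1 = 1.
Proof. by have := starM (star 1) 1; rewrite mulr1 !starK mulr1 => <-. Qed.

Lemma star_le0x a : star_le star 0 a.
Proof. by exists 0; rewrite star0 !mulr0 !mul0r. Qed.

Lemma star_orthxx_eq0 a : star_orth star a a -> a = 0.
Proof. by case=> x [xa _ xa0 _]; rewrite -xa xa0. Qed.

Lemma star_orth_sym a b : star_orth star a b -> star_orth star b a.
Proof.
case=> x [xa ax xb bx]; exists (1 - x); rewrite starD starN star1; split.
- by rewrite mulrBl mul1r xb subr0.
- by rewrite mulrBr mulr1 -bx subr0.
- by rewrite mulrBl mul1r xa subrr.
- by rewrite mulrBr mulr1 -ax subrr.
Qed.

Lemma star_orthNr a b : star_orth star a b -> star_orth star a (- b).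
Proof.
case=> x [xa ax xb bx]; exists x; split=> //.
  by rewrite mulrN xb oppr0.
by rewrite mulNr -bx oppr0.
Qed.

Lemma star_le_orth a b c :
  star_le star c a -> star_orth star a b -> star_orth star c b.
Proof.
case=> y [yc yca cy cya] [x [xa ax xb bx]].
have c_ya : c = y * a by rewrite yc yca.
have c_ay : c = a * star y by rewrite yc yca cy cya.
exists x; split=> //.
- by rewrite c_ay mulrA xa.
- by rewrite {2}c_ya -mulrA -ax -c_ya.
Qed.

Lemma star_orth_leDr a b : star_orth star a b -> star_le star a (a + b).
Proof.
case=> x [xa ax xb bx]; exists x; split.
- by rewrite xa.
- by rewrite mulrDr xb addr0.
- by rewrite mulrDr xb addr0 xa -ax.
- by rewrite mulrDl -bx addr0.
Qed.

Lemma star_le_orth_subr a b : star_le star a b -> star_orth star a (b - a).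
Proof.
case=> x [xa xab xb axb]; exists x; split.
- by rewrite -xa.
- by rewrite -xb -xab -xa.
- by rewrite mulrBr -xab subrr.
- by rewrite mulrBl -axb subrr.
Qed.

Lemma star_le_subl a b : star_le star a b -> star_le star (b - a) b.
Proof.
move=> /star_le_orth_subr /star_orth_sym /star_orth_leDr.
by rewrite subrK.
Qed.

Lemma star_orth_lb_eq0 a b d :
  star_orth star a b -> star_le star d a -> star_le star d b -> d = 0.
Proof.
case=> x [_ ax _ bx] [y [yd yda _ _]] [z [zd zdb _ _]].
have d_ya : d = y * a by rewrite yd yda.
have d_zb : d = z * b by rewrite zd zdb.
have : d * star x = 0 by rewrite d_zb -mulrA -bx mulr0.
by rewrite d_ya -mulrA -ax.
Qed.

Lemma star_orthDr a b c :
  star_orth star a b -> star_orth star (a + b) c -> star_orth star a (b + c).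
Proof.
case=> x [xa ax xb bx] [y [yab aby yc cy]].
have a_xab : a = x * (a + b) by rewrite mulrDr xb addr0 xa.
have a_abx : a = (a + b) * star x by rewrite mulrDl -bx addr0.
have ya : y * a = a by rewrite {1}a_abx mulrA yab -a_abx.
have ay : a * star y = a by rewrite {1}a_xab -mulrA -aby -a_xab.
have yb : y * b = b by apply: (@addrI _ a); rewrite -{1}ya -mulrDr yab.
have by_ : b * star y = b by apply: (@addrI _ a); rewrite -{1}ay -mulrDl -aby.
exists (x * y); rewrite starM; split.
- by rewrite -mulrA ya xa.
- by rewrite mulrA ay -ax.
- by rewrite -mulrA mulrDr yb yc addr0 xb.
- by rewrite mulrDl !mulrA by_ -cy -bx mul0r addr0.
Qed.

End StarOrthogonality.

Theorem mainTheorem6 (R : pzRingType) (star : R -> R)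
    (Hstar : is_involution star) (a b c : R) :
  (* (1) *) (star_orth star a a -> a = 0) /\
      (* (2) *) ((star_orth star a b <-> star_orth star b a)
                /\ (star_orth star b a <-> star_orth star a (- b))) /\
      (* (3) *) (star_orth star a b -> star_le star c a -> star_orth star c b) /\
      (* (4) *) (star_orth star a b <-> star_le star a (a - b)) /\
      (* (5) *) (star_le star a b -> star_le star (b - a) b /\ star_orth star (b - a) a) /\
      (* (6) *) (star_orth star a b ->
                   [/\ star_le star 0 a, star_le star 0 b,
                       (forall d : R, star_le star d a -> star_le star d b -> d = 0),
                       star_le star a (a + b) & star_le star b (a + b)]) /\
      (* (7) *) (star_orth star a b -> star_orth star (a + b) c ->
                   star_orth star a (b + c)).
Proof.
have sym := star_orth_sym Hstar.
split; first exact: star_orthxx_eq0.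
split; first split; first by split; apply: sym.
  by split=> [/sym/star_orthNr // | /star_orthNr]; rewrite opprK => /sym.
split; first by move=> ab /star_le_orth; apply.
split.
  split; first by move/star_orthNr/star_orth_leDr.
  by move/star_le_orth_subr; rewrite addrAC subrr add0r => /star_orthNr; rewrite opprK.
split; first by move=> ab; split; [apply: star_le_subl | apply/sym/star_le_orth_subr].
split; last exact: star_orthDr.
move=> ab; split; [exact: star_le0x | exact: star_le0x | | |].
- by move=> d; apply: star_orth_lb_eq0 ab.
- exact: star_orth_leDr.
- by rewrite addrC; apply/star_orth_leDr/sym.
Qed.
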